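(* Let $\alpha=(i_1^{\alpha_1},i_2^{\alpha_2},\ldots,i_m^{\alpha_m})$ be a partition of $n$ (the $i_j$ distinct part sizes, $\alpha_j$ their multiplicities). Then $$\mathbf{K}_{\alpha}=\mathbf{C}_{i_1}(X^{\alpha_1})\cdot\mathbf{C}_{i_2}(X^{\alpha_2})\cdots\mathbf{C}_{i_m}(X^{\alpha_m}),$$ where $\mathbf{C}_{i}(X^{a})$ denotes the composition $\mathbf{C}_{(i)}\circ X^{a}$.
   Context: Species are functors from finite sets with bijections to finite sets; equality means natural isomorphism. For $H\le S_n$, $X^n/H$ is the species with $(X^n/H)[U]=\{\lambda H:\lambda:[n]\to U\text{ bijection}\}$ ($\lambda H=\{\lambda\circ f:f\in H\}$), transport $(X^n/H)[\tau](\lambda H)=(\tau\lambda)H$. For a partition $\beta$ of $N$, $\sigma_\beta$ is the standard permutation filling cycles of lengths $\beta_1,\beta_2,\ldots$ with $1,\ldots,N$ in increasing order, and $\mathbf{C}_\beta:=X^N/\langle\sigma_\beta\rangle$. For $\alpha=(i_1^{\alpha_1},\ldots,i_m^{\alpha_m})$, $\mathbf{K}_\alpha$ is defined as the species product $\mathbf{C}_{i_m^{\alpha_m}}\cdot\mathbf{C}_{i_{m-1}^{\alpha_{m-1}}}\cdots\mathbf{C}_{i_1^{\alpha_1}}$, equivalently $X^n/G_\alpha$ with $G_\alpha$ the direct product of the cyclic groups generated by the standard permutations of shapes $i_j^{\alpha_j}$ acting on consecutive disjoint blocks of $[n]$. The product of species is $(F\cdot G)[U]=\bigsqcup_{U=U_1\sqcup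 U_2}F[U_1]\times G[U_2]$. $X^a$ is the species of lists of length $a$, and $(F\circ G)[U]=\bigsqcup_\pi F[\pi]\times\prod_{B\in\pi}G[B]$ over set partitions $\pi$ of $U$. *)

From mathcomp Require Import all_boot all_fingroup.
From Stdlib Require Import Lia.
From mathcomp Require Import zify.

Set Implicit Arguments.
Unset Strict Implicit.
Unset Printing Implicit Defensive.

Record bij (U V : finType) := Bij {
  bfun :> U -> V;
  binv : V -> U;
  bK : cancel bfun binv;
  bKV : cancel binv bfun }.

Definition bij_inv (U V : finType) (s : bij U V) : bij V U :=
  @Bij V U (binv s) s (@bKV _ _ s) (@bK _ _ s).

Record species := Species {
  sp_obj : finType -> finType;
  sp_map : forall U V : finType, bij U V -> sp_obj U -> sp_obj V }.
Arguments sp_map s {U V} _ _.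
Arguments sp_obj s U.

(* Functoriality (not needed to state the theorem; all species built below
   are functors). *)
Definition is_functor (F : species) : Prop :=
  (forall U (x : sp_obj F U), sp_map F (@Bij U U id id (fun _ => erefl) (fun _ => erefl)) x = x) /\
  (forall U V W (s : bij U V) (t : bij V W) (c : bij U W),
     (forall x, c x = t (s x)) ->
     forall x, sp_map F c x = sp_map F t (sp_map F s x)).

(* Equality of species = natural isomorphism. *)
Definition species_iso (F G : species) : Prop :=
  exists phi : forall U : finType, sp_obj F U -> sp_obj G U,
    (forall U, bijective (phi U)) /\
    (forall U V (s : bij U V) (x : sp_obj F U),
        phi V (sp_map F s x) = sp_map G s (phi U x)).

Definition elt (U : finType) (A : {set U}) : finType := {x : U | x \in A}.

Definition restr_bij (U V : finType) (s : bij U V) (A : {set U}) (A' : {set V})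
  (h1 : forall x, x \in A -> s x \in A') (h2 : forall y, y \in A' -> binv s y \in A) :
  bij (elt A) (elt A').
Proof.
refine (@Bij (elt A) (elt A') (fun x => exist _ (s (val x)) (h1 _ (valP x)))
                              (fun y => exist _ (binv s (val y)) (h2 _ (valP y))) _ _).
- by move=> x; apply: val_inj => /=; rewrite bK.
- by move=> y; apply: val_inj => /=; rewrite bKV.
Defined.

Lemma bij_in (U V : finType) (s : bij U V) (A : {set U}) x :
  x \in A -> s x \in s @: A.
Proof. exact: imset_f. Qed.

Lemma bij_inV (U V : finType) (s : bij U V) (A : {set U}) y :
  y \in s @: A -> binv s y \in A.
Proof. by case/imsetP=> x xA ->; rewrite bK. Qed.

Lemma bij_inC (U V : finType) (s : bij U V) (A : {set U}) x :
  x \in ~: A -> s x \in ~: (s @: A).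
Proof. by rewrite !inE; apply: contra => /bij_inV; rewrite bK. Qed.

Lemma bij_inCV (U V : finType) (s : bij U V) (A : {set U}) y :
  y \in ~: (s @: A) -> binv s y \in ~: A.
Proof. by rewrite !inE; apply: contra => /(bij_in s); rewrite bKV. Qed.

Definition set_bij (U V : finType) (s : bij U V) : bij {set U} {set V}.
Proof.
refine (@Bij _ _ (fun A : {set U} => s @: A) (fun B : {set V} => binv s @: B) _ _).
- move=> A; rewrite -imset_comp (eq_imset _ (@bK _ _ s)); exact: imset_id.
- move=> B; rewrite -imset_comp (eq_imset _ (@bKV _ _ s)); exact: imset_id.
Defined.

Definition one_sp : species.
Proof.
refine (@Species (fun U => ({_ : unit | #|U| == 0} : finType)) _).
move=> U V s x; exists tt.
have -> : #|V| = #|U| by apply/esym/bij_eq_card; exists (binv s); [exact: bK | exact: bKV].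
exact: (valP x).
Defined.

Definition prod_sp (F G : species) : species.
Proof.
refine (@Species (fun U => ({A : {set U} & (sp_obj F (elt A) * sp_obj G (elt (~: A)))%type} : finType)) _).
move=> U V s [A [x y]].
exists (s @: A); split.
- exact: (sp_map F (restr_bij (@bij_in _ _ s A) (@bij_inV _ _ s A)) x).
- exact: (sp_map G (restr_bij (@bij_inC _ _ s A) (@bij_inCV _ _ s A)) y).
Defined.

Fixpoint prod_list (l : seq species) : species :=
  match l with
  | [::] => one_sp
  | [:: F] => F
  | F :: l' => prod_sp F (prod_list l')
  end.

Definition blk (U : finType) (P : {set {set U}}) : finType := {B : {set U} | B \in P}.

Lemma bij_setT (U V : finType) (s : bij U V) : s @: [set: U] = [set: V].
Proof.
apply/setP=> y; rewrite inE; apply/imsetP; exists (binv s y); rewrite ?inE ?bKV //.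
Qed.

Lemma bij_partition (U V : finType) (s : bij U V) (P : {set {set U}}) :
  partition P [set: U] -> partition (set_bij s @: P) [set: V].
Proof.
have inj_s : injective s by apply: can_inj (@bK _ _ s).
by rewrite -(bij_setT s) -(imset_partition P _ inj_s).
Qed.

Definition comp_sp (F G : species) : species.
Proof.
refine (@Species (fun U =>
  ({P : {P : {set {set U}} | partition P [set: U]} &
     (sp_obj F (blk (val P)) *
      {dffun forall B : blk (val P), sp_obj G (elt (val B))})%type} : finType)) _).
move=> U V s [[P partP] [x h]] /=.
pose sb := @restr_bij _ _ (set_bij s) P (set_bij s @: P)
              (@bij_in _ _ (set_bij s) P) (@bij_inV _ _ (set_bij s) P).
exists (exist _ (set_bij s @: P) (bij_partition s partP)); split.
- exact: (sp_map F sb x).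
- exact: [ffun B' : blk (set_bij s @: P) =>
            sp_map G (@restr_bij _ _ s (val (binv sb B')) (val B')
                        (@bij_inV _ _ (bij_inv s) (val B'))
                        (@bij_in _ _ (bij_inv s) (val B')))
                   (h (binv sb B'))].
Defined.

(* X^a : lists of length a, i.e. bijections [a] -> U. *)
Definition Xpow (a : nat) : species.
Proof.
refine (@Species (fun U => ({l : {ffun 'I_a -> U} | injectiveb l && (#|U| == a)} : finType)) _).
move=> U V s [l /andP[linj cU]].
exists [ffun i => s (l i)]; apply/andP; split.
- apply/injectiveP => i j; rewrite !ffunE => /(can_inj (@bK _ _ s)).
  exact: (injectiveP _ linj).
- have -> : #|V| = #|U| by apply/esym/bij_eq_card; exists (binv s); [exact: bK | exact: bKV].
  exact: cU.
Defined.

(* X^n/H : left cosets lambda H of bijections lambda : [n] -> U. *)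
Definition coset_of (n : nat) (U : finType) (H : {set 'S_n}) (l : {ffun 'I_n -> U})
  : {set {ffun 'I_n -> U}} := [set [ffun i => l (f i)] | f : 'S_n in H].

Definition quot_sp (n : nat) (H : {group 'S_n}) : species.
Proof.
refine (@Species (fun U => ({S : {set {ffun 'I_n -> U}} |
   [exists l : {ffun 'I_n -> U}, [&& injectiveb l, #|U| == n & S == coset_of H l]]} : finType)) _).
move=> U V s [S hS].
exists [set [ffun i => s (g i)] | g : {ffun 'I_n -> U} in S].
case/existsP: hS => l /and3P[linj cU /eqP eS].
apply/existsP; exists [ffun i => s (l i)]; apply/and3P; split.
- apply/injectiveP => i j; rewrite !ffunE => /(can_inj (@bK _ _ s)).
  exact: (injectiveP _ linj).
- have -> : #|V| = #|U| by apply/esym/bij_eq_card; exists (binv s); [exact: bK | exact: bKV].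
  exact: cU.
- rewrite eS /coset_of -imset_comp; apply/eqP/eq_imset => f /=.
  by apply/ffunP => i; rewrite !ffunE.
Defined.

(* The standard permutation sigma_beta of shape beta (0-indexed):
   cycles (0 1 ... b1-1)(b1 ... b1+b2-1)... *)
Fixpoint cyc_fun (b : seq nat) (i : nat) : nat :=
  match b with
  | [::] => i
  | k :: b' => if i < k then (if i.+1 < k then i.+1 else 0) else k + cyc_fun b' (i - k)
  end.

Lemma cyc_lt b i : i < sumn b -> cyc_fun b i < sumn b.
Proof.
elim: b i => [|k b IH] i //= hi.
case: ifP => ik; first by case: ifP => h; lia.
have := IH (i - k); lia.
Qed.

Lemma cyc_inj b i j : i < sumn b -> j < sumn b -> cyc_fun b i = cyc_fun b j -> i = j.
Proof.
elim: b i j => [|k b IH] i j //= hi hj.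
case: (ltnP i k) => ik; case: (ltnP j k) => jk.
- by case: (ltnP i.+1 k) => h1; case: (ltnP j.+1 k) => h2; lia.
- by case: (ltnP i.+1 k) => h1; lia.
- by case: (ltnP j.+1 k) => h1; lia.
- move=> e; have := IH (i - k) (j - k); lia.
Qed.

Definition sigma_fun (b : seq nat) (i : 'I_(sumn b)) : 'I_(sumn b) :=
  Ordinal (cyc_lt (ltn_ord i)).

Lemma sigma_inj b : injective (@sigma_fun b).
Proof. by move=> i j /(congr1 val) /= /cyc_inj e; apply: val_inj; apply: e. Qed.

Definition sigma (b : seq nat) : 'S_(sumn b) := perm (@sigma_inj b).

Definition Cyc (b : seq nat) : species := quot_sp <[sigma b]>%G.

(* A partition alpha = (i_1^{a_1}, ..., i_m^{a_m}) is encoded as the list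
   [:: (i_1, a_1); ...; (i_m, a_m)].  The shape i^a is nseq a i. *)
Definition Kalpha (alpha : seq (nat * nat)) : species :=
  prod_list [seq Cyc (nseq p.2 p.1) | p <- rev alpha].

(* Every species in sight is of the form X^T/Sg: the sets l o Sg of precompositions of a
   bijection l : T -> U with the maps of a set Sg of self-maps of T containing the identity.
   Transporting along the inclusions of A and ~: A, a product (X^T1/S1).(X^T2/S2) is
   X^(T1+T2)/(S1 + S2), so products of such species are commutative and associative up to
   isomorphism, and the reversed order of the factors in K_alpha is harmless.  Reading each
   block of a partition along its list of length a identifies (X^T/Sg) o X^a with
   X^(T*[a])/(Sg * 1).  Finally (k, j) |-> j*i + k conjugates the standard permutation of
   shape i^a into sigma_i * 1, so C_(i^a) = X^(a*i)/<sigma_(i^a)> is C_i o X^a. *)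

From Pilot Require Import Defs.
From mathcomp Require Import all_boot all_fingroup.
From Stdlib Require Import Lia.
From mathcomp Require Import zify.

Set Implicit Arguments.
Unset Strict Implicit.
Unset Printing Implicit Defensive.

Section InverseOfBijective.
Variables (T1 T2 : finType) (f : T1 -> T2) (f_bij : bijective f).

Let f_surj y : exists x, f x == y.
Proof. by case: f_bij => g _ gK; exists (g y); rewrite gK. Qed.

Definition inv_fun y := xchoose (f_surj y).

Lemma inv_funKV : cancel inv_fun f.
Proof. by move=> y; apply/eqP/(xchooseP (f_surj y)). Qed.

Lemma inv_funK : cancel f inv_fun.
Proof. by move=> x; apply: (bij_inj f_bij); rewrite inv_funKV. Qed.

Definition bij_of_bijective : bij T1 T2 := Bij inv_funK inv_funKV.

End InverseOfBijective.

Lemma inj_surj_bij (T1 T2 : finType) (f : T1 -> T2) :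
  injective f -> (forall y, exists x, f x = y) -> bijective f.
Proof.
move=> f_inj f_surj; apply: (inj_card_bij f_inj).
rewrite -(card_codom f_inj); apply/subset_leq_card/subsetP => y _.
by have [x <-] := f_surj y; exact: codom_f.
Qed.

Lemma bij_card (U V : finType) (s : bij U V) : #|U| = #|V|.
Proof. by apply: bij_eq_card; exists (binv s); [exact: bK | exact: bKV]. Qed.

Lemma card_elt (U : finType) (A : {set U}) : #|elt A| = #|A|.
Proof. by rewrite card_sig; apply: eq_card. Qed.

Lemma iso_refl F : species_iso F F.
Proof. by exists (fun U x => x); split=> // U; exists id. Qed.

Lemma iso_sym F G : species_iso F G -> species_iso G F.
Proof.
case=> phi [phi_bij phi_nat]; exists (fun U => inv_fun (phi_bij U)); split.
- by move=> U; exists (phi U); [exact: inv_funKV | exact: inv_funK].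
- by move=> U V s y; apply: (bij_inj (phi_bij V)); rewrite inv_funKV phi_nat inv_funKV.
Qed.

Lemma iso_trans F G H : species_iso F G -> species_iso G H -> species_iso F H.
Proof.
case=> phi [phi_bij phi_nat] [psi [psi_bij psi_nat]].
exists (fun U x => psi U (phi U x)); split=> [U|U V s x]; first exact: bij_comp.
by rewrite phi_nat psi_nat.
Qed.

Lemma iso_prod F F' G G' :
  species_iso F F' -> species_iso G G' -> species_iso (prod_sp F G) (prod_sp F' G').
Proof.
case=> phi [phi_bij phi_nat] [psi [psi_bij psi_nat]].
exists (fun U (z : sp_obj (prod_sp F G) U) => let: existT A (x, y) := z in
          (existT _ A (phi _ x, psi _ y) : sp_obj (prod_sp F' G') U)).
split=> [U|U V s [A [x y]] /=]; last by rewrite phi_nat psi_nat.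
exists (fun z : sp_obj (prod_sp F' G') U => let: existT A (x, y) := z in
          (existT _ A (inv_fun (phi_bij _) x, inv_fun (psi_bij _) y) : sp_obj (prod_sp F G) U)).
- by case=> A [x y] /=; rewrite !inv_funK.
- by case=> A [x y] /=; rewrite !inv_funKV.
Qed.

Lemma iso_prod_list (A : eqType) (f g : A -> species) (s : seq A) :
  {in s, forall x, species_iso (f x) (g x)} ->
  species_iso (prod_list (map f s)) (prod_list (map g s)).
Proof.
elim: s => [|x [|y s] IH] fg /=; first exact: iso_refl.
  by apply: fg; rewrite inE eqxx.
apply: iso_prod; first by apply: fg; rewrite inE eqxx.
by apply: IH => z zs; apply: fg; rewrite inE zs orbT.
Qed.

Lemma iso_comp F F' G : species_iso F F' -> species_iso (comp_sp F G) (comp_sp F' G).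
Proof.
case=> phi [phi_bij phi_nat].
exists (fun U (z : sp_obj (comp_sp F G) U) => let: existT P (x, h) := z in
          (existT _ P (phi _ x, h) : sp_obj (comp_sp F' G) U)).
split=> [U|U V s [[P partP] [x h]] /=]; last by rewrite phi_nat.
exists (fun z : sp_obj (comp_sp F' G) U => let: existT P (x, h) := z in
          (existT _ P (inv_fun (phi_bij _) x, h) : sp_obj (comp_sp F G) U)).
- by case=> P [x h] /=; rewrite inv_funK.
- by case=> P [x h] /=; rewrite inv_funKV.
Qed.

Lemma sp_map_comp_sp (F G : species) (U V : finType) (s : bij U V) (P : {set {set U}})
    (partP : partition P [set: U]) x h :
  sp_map (comp_sp F G) s (existT _ (exist _ P partP) (x, h)) =
  existT (fun P' : {P' : {set {set V}} | partition P' [set: V]} =>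
            (sp_obj F (blk (val P')) *
             {dffun forall B : blk (val P'), sp_obj G (elt (val B))})%type)
   (exist _ (set_bij s @: P) (bij_partition s partP))
   (sp_map F (restr_bij (@bij_in _ _ (set_bij s) P) (@bij_inV _ _ (set_bij s) P)) x,
    [ffun B' : blk (set_bij s @: P) =>
      sp_map G (restr_bij (@bij_inV _ _ (bij_inv s) (val B')) (@bij_in _ _ (bij_inv s) (val B')))
        (h (binv (restr_bij (@bij_in _ _ (set_bij s) P) (@bij_inV _ _ (set_bij s) P)) B'))]).
Proof. by []. Qed.

Definition precomp (T T' U : finType) (p : T' -> T) (l : {ffun T -> U}) : {ffun T' -> U} :=
  [ffun t => l (p t)].

Definition postcomp (T U V : finType) (s : U -> V) (l : {ffun T -> U}) : {ffun T -> V} :=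
  [ffun t => s (l t)].

Definition ffid (T : finType) : {ffun T -> T} := [ffun t => t].

(* [lcoset_sp Sg] is X^T/Sg; Sg need not be a group. *)
Section LcosetSpecies.
Variables (T : finType) (Sg : {set {ffun T -> T}}).

Definition lcoset (U : finType) (l : {ffun T -> U}) : {set {ffun T -> U}} :=
  [set precomp (p : {ffun T -> T}) l | p in Sg].

Definition is_lcoset (U : finType) (S : {set {ffun T -> U}}) : bool :=
  [exists l : {ffun T -> U}, [&& injectiveb l, #|U| == #|T| & S == lcoset l]].

Lemma postcomp_lcoset (U V : finType) (s : U -> V) (l : {ffun T -> U}) :
  [set postcomp s g | g in lcoset l] = lcoset (postcomp s l).
Proof.
rewrite -imset_comp; apply: eq_imset => p /=.
by apply/ffunP => t; rewrite !ffunE.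
Qed.

Lemma lcoset_is_lcoset (U : finType) (l : {ffun T -> U}) :
  injective l -> #|U| = #|T| -> is_lcoset (lcoset l).
Proof.
by move=> l_inj cardU; apply/existsP; exists l; rewrite cardU !eqxx !andbT; apply/injectiveP.
Qed.

Lemma is_lcoset_map (U V : finType) (s : bij U V) (S : {set {ffun T -> U}}) :
  is_lcoset S -> is_lcoset [set postcomp s g | g in S].
Proof.
case/existsP=> l /and3P[/injectiveP l_inj /eqP cardU /eqP ->].
rewrite postcomp_lcoset; apply: lcoset_is_lcoset; last by rewrite -(bij_card s).
by move=> t t'; rewrite !ffunE => /(can_inj (@bK _ _ s))/l_inj.
Qed.

Definition lcoset_sp : species :=
  @Species (fun U => ({S : {set {ffun T -> U}} | is_lcoset S} : finType))
    (fun U V s S => exist _ [set postcomp s g | g in val S] (is_lcoset_map s (valP S))).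

Lemma sp_map_lcoset_val (U V : finType) (s : bij U V) S :
  val (sp_map lcoset_sp s S) = [set postcomp s g | g in val S].
Proof. by []. Qed.

Hypothesis Sg_1 : ffid T \in Sg.

Lemma is_lcosetP (U : finType) (S : {set {ffun T -> U}}) :
  is_lcoset S ->
  exists2 l : {ffun T -> U}, l \in S & [/\ injective l, #|U| = #|T| & S = lcoset l].
Proof.
case/existsP=> l /and3P[/injectiveP l_inj /eqP cardU /eqP eS]; exists l => //.
by rewrite eS; apply/imsetP; exists (ffid T) => //; apply/ffunP => t; rewrite !ffunE.
Qed.

End LcosetSpecies.

Definition perm_maps n (H : {set 'S_n}) : {set {ffun 'I_n -> 'I_n}} :=
  [set [ffun i => (f : 'S_n) i] | f in H].

Lemma perm_maps1 n (H : {group 'S_n}) : ffid _ \in perm_maps H.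
Proof. by apply/imsetP; exists 1%g => //; apply/ffunP => i; rewrite !ffunE perm1. Qed.

Lemma quot_sp_lcoset n (H : {group 'S_n}) : species_iso (quot_sp H) (lcoset_sp (perm_maps H)).
Proof.
have coset_lcoset (U : finType) (l : {ffun 'I_n -> U}) : Defs.coset_of H l = lcoset (perm_maps H) l.
  rewrite /lcoset -imset_comp; apply: eq_imset => f /=.
  by apply/ffunP => i; rewrite !ffunE.
have to_lcoset U (S : sp_obj (quot_sp H) U) : is_lcoset (perm_maps H) (val S).
  case: S => S /= /existsP[l /and3P[l_inj cardU /eqP ->]]; apply/existsP; exists l.
  by rewrite l_inj card_ord cardU coset_lcoset eqxx.
have of_lcoset U (S : sp_obj (lcoset_sp (perm_maps H)) U) :
    [exists l : {ffun 'I_n -> U}, [&& injectiveb l, #|U| == n & val S == Defs.coset_of H l]].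
  case: S => S /= /existsP[l /and3P[l_inj cardU /eqP ->]]; apply/existsP; exists l.
  by rewrite l_inj coset_lcoset eqxx -[n in #|U| == n](card_ord n) cardU.
exists (fun U S => exist _ (val S) (to_lcoset U S)); split=> [U|U V s [S hS]].
- by exists (fun S => exist _ (val S) (of_lcoset U S) : sp_obj (quot_sp H) U) => S;
    apply: val_inj.
- by apply: val_inj; apply: eq_imset => g; apply/ffunP => i; rewrite !ffunE.
Qed.

Definition ffun_sum (T1 T2 U : finType) (g1 : {ffun T1 -> U}) (g2 : {ffun T2 -> U}) :
  {ffun (T1 + T2)%type -> U} :=
  [ffun t => match t with inl t1 => g1 t1 | inr t2 => g2 t2 end].

Definition sum_maps (T1 T2 : finType) (S1 : {set {ffun T1 -> T1}}) (S2 : {set {ffun T2 -> T2}}) :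
  {set {ffun (T1 + T2)%type -> (T1 + T2)%type}} :=
  [set ffun_sum (postcomp inl p1) (postcomp inr p2) | p1 in S1, p2 in S2].

Lemma sum_maps1 (T1 T2 : finType) (S1 : {set {ffun T1 -> T1}}) (S2 : {set {ffun T2 -> T2}}) :
  ffid _ \in S1 -> ffid _ \in S2 -> ffid _ \in sum_maps S1 S2.
Proof.
move=> S1_1 S2_1; apply/imset2P; exists (ffid T1) (ffid T2) => //.
by apply/ffunP => -[t1|t2]; rewrite !ffunE.
Qed.

Lemma ffun_sum_lcoset (T1 T2 U1 U2 U : finType)
    (S1 : {set {ffun T1 -> T1}}) (S2 : {set {ffun T2 -> T2}})
    (f1 : U1 -> U) (f2 : U2 -> U) (l1 : {ffun T1 -> U1}) (l2 : {ffun T2 -> U2}) :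
  [set ffun_sum (postcomp f1 g1) (postcomp f2 g2) | g1 in lcoset S1 l1, g2 in lcoset S2 l2]
  = lcoset (sum_maps S1 S2) (ffun_sum (postcomp f1 l1) (postcomp f2 l2)).
Proof.
apply/setP => g; apply/imset2P/imsetP.
- case=> _ _ /imsetP[p1 p1S ->] /imsetP[p2 p2S ->] ->.
  exists (ffun_sum (postcomp inl p1) (postcomp inr p2)); first exact: imset2_f.
  by apply/ffunP => -[t1|t2]; rewrite !ffunE.
- case=> _ /imset2P[p1 p2 p1S p2S ->] ->.
  exists (precomp p1 l1) (precomp p2 l2); try exact: imset_f.
  by apply/ffunP => -[t1|t2]; rewrite !ffunE.
Qed.

Lemma ffun_sum_val_inj (T1 T2 U : finType) (A B : {set U}) :
  injective2 (fun (g1 : {ffun T1 -> elt A}) (g2 : {ffun T2 -> elt B}) =>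
                ffun_sum (postcomp val g1) (postcomp val g2)).
Proof.
move=> g1 g1' g2 g2' /ffunP eq_g; split; apply/ffunP => t; apply: val_inj.
- by have := eq_g (inl t); rewrite !ffunE.
- by have := eq_g (inr t); rewrite !ffunE.
Qed.

Lemma split_inj_ffun_sum (T1 T2 U : finType) (l : {ffun (T1 + T2)%type -> U}) :
  injective l ->
  exists A : {set U}, exists (l1 : {ffun T1 -> elt A}) (l2 : {ffun T2 -> elt (~: A)}),
    [/\ injective l1, injective l2, #|A| = #|T1|
      & l = ffun_sum (postcomp val l1) (postcomp val l2)].
Proof.
move=> l_inj; pose A := [set l (inl t) | t : T1].
have inlA t : l (inl t) \in A by exact: imset_f.
have inrA t : l (inr t) \in ~: A by rewrite inE; apply/imsetP => -[t' _ /l_inj].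
exists A, [ffun t => exist (fun u => u \in A) _ (inlA t)],
  [ffun t => exist (fun u => u \in ~: A) _ (inrA t)]; split.
- by move=> t t'; rewrite !ffunE => /(congr1 val)/l_inj [].
- by move=> t t'; rewrite !ffunE => /(congr1 val)/l_inj [].
- by rewrite card_imset ?cardsT // => t t' /l_inj [].
- by apply/ffunP => -[t|t]; rewrite !ffunE.
Qed.

Section LcosetProduct.
Variables (T1 T2 : finType) (S1 : {set {ffun T1 -> T1}}) (S2 : {set {ffun T2 -> T2}}).
Hypotheses (S1_1 : ffid _ \in S1) (S2_1 : ffid _ \in S2).

Definition join_lcosets (U : finType) (A : {set U}) (X1 : {set {ffun T1 -> elt A}})
    (X2 : {set {ffun T2 -> elt (~: A)}}) : {set {ffun (T1 + T2)%type -> U}} :=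
  [set ffun_sum (postcomp val g1) (postcomp val g2) | g1 in X1, g2 in X2].

Lemma join_lcosets_is_lcoset (U : finType) (A : {set U})
    (X1 : {set {ffun T1 -> elt A}}) (X2 : {set {ffun T2 -> elt (~: A)}}) :
  is_lcoset S1 X1 -> is_lcoset S2 X2 -> is_lcoset (sum_maps S1 S2) (join_lcosets X1 X2).
Proof.
case/existsP=> l1 /and3P[/injectiveP l1_inj /eqP card1 /eqP ->].
case/existsP=> l2 /and3P[/injectiveP l2_inj /eqP card2 /eqP ->].
rewrite /join_lcosets ffun_sum_lcoset; apply: lcoset_is_lcoset; last first.
  by rewrite card_sum -card1 -card2 !card_elt cardsC.
move=> [t1|t2] [t1'|t2']; rewrite !ffunE.
- by move/val_inj/l1_inj ->.
- by move=> eq_l; have := valP (l2 t2'); rewrite -eq_l inE (valP (l1 t1)).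
- by move=> eq_l; have := valP (l2 t2); rewrite eq_l inE (valP (l1 t1')).
- by move/val_inj/l2_inj ->.
Qed.

Definition join_lcosets_sp (U : finType) (z : sp_obj (prod_sp (lcoset_sp S1) (lcoset_sp S2)) U) :
  sp_obj (lcoset_sp (sum_maps S1 S2)) U :=
  let: existT A (X1, X2) := z in
  exist _ (join_lcosets (val X1) (val X2)) (join_lcosets_is_lcoset (valP X1) (valP X2)).

Lemma join_lcosets_sp_nat (U V : finType) (s : bij U V) z :
  join_lcosets_sp (sp_map (prod_sp (lcoset_sp S1) (lcoset_sp S2)) s z)
  = sp_map (lcoset_sp (sum_maps S1 S2)) s (join_lcosets_sp z).
Proof.
case: z => A [[X1 h1] [X2 h2]]; apply: val_inj => /=.
apply/setP => g; apply/imset2P/imsetP.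
- case=> _ _ /imsetP[g1 g1X ->] /imsetP[g2 g2X ->] ->.
  exists (ffun_sum (postcomp val g1) (postcomp val g2)); first exact: imset2_f.
  by apply/ffunP => -[t1|t2]; rewrite !ffunE.
- case=> _ /imset2P[g1 g2 g1X g2X ->] ->.
  exists (postcomp (restr_bij (@bij_in _ _ s A) (@bij_inV _ _ s A)) g1)
         (postcomp (restr_bij (@bij_inC _ _ s A) (@bij_inCV _ _ s A)) g2); try exact: imset_f.
  by apply/ffunP => -[t1|t2]; rewrite !ffunE.
Qed.

Lemma join_lcosetsS (U : finType) (A : {set U}) (X1 X1' : {set {ffun T1 -> elt A}})
    (X2 X2' : {set {ffun T2 -> elt (~: A)}}) k1 k2 :
  k1 \in X1 -> k2 \in X2 -> join_lcosets X1 X2 = join_lcosets X1' X2' ->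
  X1 \subset X1' /\ X2 \subset X2'.
Proof.
move=> k1X k2X eqX; split; apply/subsetP => g gX.
- have : ffun_sum (postcomp val g) (postcomp val k2) \in join_lcosets X1 X2 by exact: imset2_f.
  by rewrite eqX => /imset2P[g1 g2 g1X _ /ffun_sum_val_inj[-> _]].
- have : ffun_sum (postcomp val k1) (postcomp val g) \in join_lcosets X1 X2 by exact: imset2_f.
  by rewrite eqX => /imset2P[g1 g2 _ g2X /ffun_sum_val_inj[_ ->]].
Qed.

Lemma join_lcosets_support (U : finType) (A A' : {set U})
    (X1 : {set {ffun T1 -> elt A}}) (X2 : {set {ffun T2 -> elt (~: A)}})
    (X1' : {set {ffun T1 -> elt A'}}) (X2' : {set {ffun T2 -> elt (~: A')}}) :
  is_lcoset S1 X1 -> is_lcoset S2 X2 ->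
  join_lcosets X1 X2 = join_lcosets X1' X2' -> A \subset A'.
Proof.
move=> /(is_lcosetP S1_1)[l1 l1X [l1_inj card1 _]] /(is_lcosetP S2_1)[l2 l2X _] eqX.
have : ffun_sum (postcomp val l1) (postcomp val l2) \in join_lcosets X1 X2 by exact: imset2_f.
rewrite eqX => /imset2P[g1 g2 _ _ /ffunP eq_g]; apply/subsetP => u uA.
have /codomP[t eq_t] : (exist _ u uA : elt A) \in codom l1.
  by apply: (inj_card_onto l1_inj); rewrite card1.
by have := eq_g (inl t); rewrite !ffunE -eq_t /= => ->; exact: valP.
Qed.

Lemma join_lcosets_sp_inj (U : finType) : injective (@join_lcosets_sp U).
Proof.
case=> [A [[X1 h1] [X2 h2]]] [A' [[X1' h1'] [X2' h2']]] /(congr1 val) /= eqX.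
have eqA : A = A'.
  apply/eqP; rewrite eqEsubset (join_lcosets_support h1 h2 eqX).
  exact: (join_lcosets_support h1' h2' (esym eqX)).
subst A'.
have [k1 k1X _] := is_lcosetP S1_1 h1; have [k2 k2X _] := is_lcosetP S2_1 h2.
have [k1' k1X' _] := is_lcosetP S1_1 h1'; have [k2' k2X' _] := is_lcosetP S2_1 h2'.
have [sub1 sub2] := join_lcosetsS k1X k2X eqX.
have [sub1' sub2'] := join_lcosetsS k1X' k2X' (esym eqX).
have eq1 : X1 = X1' by apply/eqP; rewrite eqEsubset sub1 sub1'.
have eq2 : X2 = X2' by apply/eqP; rewrite eqEsubset sub2 sub2'.
subst X1' X2'; by rewrite (bool_irrelevance h1 h1') (bool_irrelevance h2 h2').
Qed.

Lemma join_lcosets_sp_surj (U : finType) (S : sp_obj (lcoset_sp (sum_maps S1 S2)) U) :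
  exists z, join_lcosets_sp z = S.
Proof.
case: S => S hS; have [l _ [l_inj cardU eS]] := is_lcosetP (sum_maps1 S1_1 S2_1) hS.
have [A [l1 [l2 [l1_inj l2_inj cardA eq_l]]]] := split_inj_ffun_sum l_inj.
have h1 : is_lcoset S1 (lcoset S1 l1) by apply: lcoset_is_lcoset; rewrite ?card_elt.
have h2 : is_lcoset S2 (lcoset S2 l2).
  by apply: lcoset_is_lcoset; rewrite // card_elt cardsCs setCK cardU card_sum cardA addKn.
exists (existT _ A (exist (fun X => is_lcoset S1 X) _ h1, exist (fun X => is_lcoset S2 X) _ h2)).
by apply: val_inj => /=; rewrite eS eq_l; exact: ffun_sum_lcoset.
Qed.

Lemma lcoset_sp_prod :
  species_iso (prod_sp (lcoset_sp S1) (lcoset_sp S2)) (lcoset_sp (sum_maps S1 S2)).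
Proof.
exists join_lcosets_sp; split; last exact: join_lcosets_sp_nat.
by move=> U; apply: inj_surj_bij; [exact: join_lcosets_sp_inj | exact: join_lcosets_sp_surj].
Qed.

End LcosetProduct.

Section LcosetConjugation.
Variables (T T' : finType) (Sg : {set {ffun T -> T}}) (Sg' : {set {ffun T' -> T'}}).
Variable b : bij T' T.
Hypothesis conj_to : forall p, p \in Sg -> exists2 p', p' \in Sg' & forall t, p (b t) = b (p' t).
Hypothesis conj_from :
  forall p', p' \in Sg' -> exists2 p, p \in Sg & forall t, p (b t) = b (p' t).

Lemma precomp_lcoset (U : finType) (l : {ffun T -> U}) :
  [set precomp b g | g in lcoset Sg l] = lcoset Sg' (precomp b l).
Proof.
apply/setP => g; apply/imsetP/imsetP.
- case=> _ /imsetP[p pS ->] ->; have [p' p'S conj_p] := conj_to pS.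
  by exists p' => //; apply/ffunP => t; rewrite !ffunE conj_p.
- case=> p' p'S ->; have [p pS conj_p] := conj_from p'S.
  by exists (precomp p l); [exact: imset_f | apply/ffunP => t; rewrite !ffunE conj_p].
Qed.

Lemma precomp_inj (U : finType) : injective (@precomp T T' U b).
Proof.
by move=> g g' /ffunP eq_g; apply/ffunP => t; have := eq_g (binv b t); rewrite !ffunE bKV.
Qed.

Lemma is_lcoset_precomp (U : finType) (S : {set {ffun T -> U}}) :
  is_lcoset Sg S -> is_lcoset Sg' [set precomp b g | g in S].
Proof.
case/existsP=> l /and3P[/injectiveP l_inj /eqP cardU /eqP ->].
rewrite precomp_lcoset; apply: lcoset_is_lcoset; last by rewrite (bij_card b).
by move=> t t'; rewrite !ffunE => /l_inj/(can_inj (@bK _ _ b)).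
Qed.

Definition precomp_sp (U : finType) (S : sp_obj (lcoset_sp Sg) U) : sp_obj (lcoset_sp Sg') U :=
  exist _ [set precomp b g | g in val S] (is_lcoset_precomp (valP S)).

Lemma precomp_sp_surj (U : finType) (S' : sp_obj (lcoset_sp Sg') U) :
  exists S, precomp_sp S = S'.
Proof.
case: S' => S' hS'; case/existsP: (hS') => l' /and3P[/injectiveP l'_inj /eqP cardU /eqP eS'].
pose l := [ffun t => l' (binv b t)].
have hS : is_lcoset Sg (lcoset Sg l).
  apply: lcoset_is_lcoset; last by rewrite -(bij_card b).
  by move=> t t'; rewrite !ffunE => /l'_inj/(can_inj (@bKV _ _ b)).
exists (exist (fun X => is_lcoset Sg X) _ hS); apply: val_inj => /=.
by rewrite precomp_lcoset eS'; congr lcoset; apply/ffunP => t; rewrite !ffunE bK.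
Qed.

Lemma lcoset_sp_conj : species_iso (lcoset_sp Sg) (lcoset_sp Sg').
Proof.
exists precomp_sp; split=> [U|U V s [S hS]].
- apply: inj_surj_bij; last exact: precomp_sp_surj.
  move=> [S hS] [S' hS'] /(congr1 val) /= /(imset_inj (@precomp_inj U)) eqS.
  by apply: val_inj.
- apply: val_inj => /=; rewrite -!imset_comp; apply: eq_imset => g /=.
  by apply/ffunP => t; rewrite !ffunE.
Qed.

End LcosetConjugation.

Definition swap_sum (A B : Type) (t : A + B) : B + A :=
  match t with inl a => inr a | inr b => inl b end.

Lemma swap_sumK A B : cancel (@swap_sum A B) (@swap_sum B A). Proof. by case. Qed.

Definition swap_bij (A B : finType) : bij (A + B)%type (B + A)%type :=
  Bij (@swap_sumK A B) (@swap_sumK B A).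

Definition assoc_sum (A B C : Type) (t : (A + B) + C) : A + (B + C) :=
  match t with inl (inl a) => inl a | inl (inr b) => inr (inl b) | inr c => inr (inr c) end.

Definition unassoc_sum (A B C : Type) (t : A + (B + C)) : (A + B) + C :=
  match t with inl a => inl (inl a) | inr (inl b) => inl (inr b) | inr (inr c) => inr c end.

Lemma assoc_sumK A B C : cancel (@assoc_sum A B C) (@unassoc_sum A B C).
Proof. by do 2?case. Qed.

Lemma unassoc_sumK A B C : cancel (@unassoc_sum A B C) (@assoc_sum A B C).
Proof. by do 2?case. Qed.

Definition assoc_bij (A B C : finType) : bij ((A + B) + C)%type (A + (B + C))%type :=
  Bij (@assoc_sumK A B C) (@unassoc_sumK A B C).

Lemma lcoset_sp_sum_maps_comm (T1 T2 : finType)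
    (S1 : {set {ffun T1 -> T1}}) (S2 : {set {ffun T2 -> T2}}) :
  species_iso (lcoset_sp (sum_maps S1 S2)) (lcoset_sp (sum_maps S2 S1)).
Proof.
apply: (@lcoset_sp_conj _ _ _ _ (swap_bij T2 T1)).
- move=> _ /imset2P[p1 p2 p1S p2S ->].
  exists (ffun_sum (postcomp inl p2) (postcomp inr p1)); first exact: imset2_f.
  by case=> t /=; rewrite !ffunE.
- move=> _ /imset2P[p2 p1 p2S p1S ->].
  exists (ffun_sum (postcomp inl p1) (postcomp inr p2)); first exact: imset2_f.
  by case=> t /=; rewrite !ffunE.
Qed.

Lemma lcoset_sp_sum_maps_assoc (T1 T2 T3 : finType) (S1 : {set {ffun T1 -> T1}})
    (S2 : {set {ffun T2 -> T2}}) (S3 : {set {ffun T3 -> T3}}) :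
  species_iso (lcoset_sp (sum_maps S1 (sum_maps S2 S3)))
              (lcoset_sp (sum_maps (sum_maps S1 S2) S3)).
Proof.
apply: (@lcoset_sp_conj _ _ _ _ (assoc_bij T1 T2 T3)).
- move=> _ /imset2P[p1 _ p1S /imset2P[p2 p3 p2S p3S ->] ->].
  exists (ffun_sum (postcomp inl (ffun_sum (postcomp inl p1) (postcomp inr p2)))
                   (postcomp inr p3)); first by apply: imset2_f => //; exact: imset2_f.
  by case=> [[t|t]|t] /=; rewrite !ffunE.
- move=> _ /imset2P[_ p3 /imset2P[p1 p2 p1S p2S ->] p3S ->].
  exists (ffun_sum (postcomp inl p1)
                   (postcomp inr (ffun_sum (postcomp inl p2) (postcomp inr p3))));
    first by apply: imset2_f => //; exact: imset2_f.
  by case=> [[t|t]|t] /=; rewrite !ffunE.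
Qed.

Definition is_lcoset_species (F : species) : Prop :=
  exists (T : finType) (Sg : {set {ffun T -> T}}), ffid T \in Sg /\ species_iso F (lcoset_sp Sg).

Lemma is_lcoset_species_quot n (H : {group 'S_n}) : is_lcoset_species (quot_sp H).
Proof. by exists 'I_n, (perm_maps H); split; [exact: perm_maps1 | exact: quot_sp_lcoset]. Qed.

Lemma is_lcoset_species_prod F G :
  is_lcoset_species F -> is_lcoset_species G -> is_lcoset_species (prod_sp F G).
Proof.
case=> T1 [S1 [S1_1 isoF]] [T2 [S2 [S2_1 isoG]]].
exists (T1 + T2)%type, (sum_maps S1 S2); split; first exact: sum_maps1.
exact: iso_trans (iso_prod isoF isoG) (lcoset_sp_prod S1_1 S2_1).
Qed.

Lemma iso_prod_spC F G : is_lcoset_species F -> is_lcoset_species G ->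
  species_iso (prod_sp F G) (prod_sp G F).
Proof.
case=> T1 [S1 [S1_1 isoF]] [T2 [S2 [S2_1 isoG]]].
apply: iso_trans (iso_prod isoF isoG) _.
apply: iso_trans (lcoset_sp_prod S1_1 S2_1) _.
apply: iso_trans (lcoset_sp_sum_maps_comm S1 S2) _.
apply: iso_trans (iso_sym (lcoset_sp_prod S2_1 S1_1)) _.
exact: iso_prod (iso_sym isoG) (iso_sym isoF).
Qed.

Lemma iso_prod_spA F G H :
  is_lcoset_species F -> is_lcoset_species G -> is_lcoset_species H ->
  species_iso (prod_sp F (prod_sp G H)) (prod_sp (prod_sp F G) H).
Proof.
case=> T1 [S1 [S1_1 isoF]] [T2 [S2 [S2_1 isoG]]] [T3 [S3 [S3_1 isoH]]].
apply: iso_trans (iso_prod isoF (iso_prod isoG isoH)) _.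
apply: iso_trans (iso_prod (iso_refl _) (lcoset_sp_prod S2_1 S3_1)) _.
apply: iso_trans (lcoset_sp_prod S1_1 (sum_maps1 S2_1 S3_1)) _.
apply: iso_trans (lcoset_sp_sum_maps_assoc S1 S2 S3) _.
apply: iso_trans (iso_sym (lcoset_sp_prod (sum_maps1 S1_1 S2_1) S3_1)) _.
apply: iso_trans (iso_prod (iso_sym (lcoset_sp_prod S1_1 S2_1)) (iso_refl _)) _.
exact: iso_prod (iso_prod (iso_sym isoF) (iso_sym isoG)) (iso_sym isoH).
Qed.

Section ProdListRev.
Variables (A : Type) (f : A -> species).
Hypothesis fQ : forall x, is_lcoset_species (f x).

Lemma is_lcoset_species_prod_list x s : is_lcoset_species (prod_list (map f (x :: s))).
Proof.
elim: s x => [|y s IH] x //=; exact: is_lcoset_species_prod (fQ x) (IH y).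
Qed.

Lemma prod_list_rcons x s y :
  species_iso (prod_list (map f (rcons (x :: s) y))) (prod_sp (prod_list (map f (x :: s))) (f y)).
Proof.
elim: s x => [|z s IH] x /=; first exact: iso_refl.
apply: iso_trans (iso_prod (iso_refl (f x)) (IH z)) _.
exact: iso_prod_spA (fQ x) (is_lcoset_species_prod_list z s) (fQ y).
Qed.

Lemma prod_list_rev s : species_iso (prod_list (map f (rev s))) (prod_list (map f s)).
Proof.
elim: s => [|x s IH]; first exact: iso_refl.
rewrite rev_cons; case: s IH => [|z s] IH; first exact: iso_refl.
case E: (rev (z :: s)) IH => [|y r] IH; first by move/(congr1 size): E; rewrite size_rev.
apply: iso_trans (prod_list_rcons y r x) _.
apply: iso_trans (iso_prod IH (iso_refl _)) _.
exact: iso_prod_spC (is_lcoset_species_prod_list z s) (fQ x).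
Qed.

End ProdListRev.

Section Xpow.
Variable a : nat.

Definition xlist (U : finType) (y : sp_obj (Xpow a) U) : {ffun 'I_a -> U} := sval y.

Lemma xlist_inj (U : finType) : injective (@xlist U).
Proof. by move=> y y' eq_y; apply: val_inj. Qed.

Lemma inj_xlist (U : finType) (y : sp_obj (Xpow a) U) : injective (xlist y).
Proof. by case: y => l /= /andP[/injectiveP]. Qed.

Lemma card_xlist (U : finType) (y : sp_obj (Xpow a) U) : #|U| = a.
Proof. by case: y => l /= /andP[_ /eqP]. Qed.

Lemma xlist_onto (U : finType) (y : sp_obj (Xpow a) U) (u : U) : exists j, xlist y j = u.
Proof.
have /codomP[j ->] : u \in codom (xlist y).
  by apply: inj_card_onto; [exact: inj_xlist | rewrite card_ord card_xlist].
by exists j.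
Qed.

Lemma xlist_map (U V : finType) (s : bij U V) (y : sp_obj (Xpow a) U) :
  xlist (sp_map (Xpow a) s y) = postcomp s (xlist y).
Proof. by case: y => l /= /andP[]. Qed.

Definition mk_xlist (W : finType) (f : {ffun 'I_a -> W}) (f_inj : injective f)
    (cardW : #|W| = a) : sp_obj (Xpow a) W :=
  exist _ f (introT andP (conj (introT (injectiveP f) f_inj) (introT eqP cardW))).

End Xpow.

Lemma partition_block_eq (U : finType) (P : {set {set U}}) (B1 B2 : {set U}) u :
  partition P [set: U] -> B1 \in P -> B2 \in P -> u \in B1 -> u \in B2 -> B1 = B2.
Proof.
case/and3P=> _ tP _ B1P B2P uB1 uB2.
by rewrite -(def_pblock tP B1P uB1) (def_pblock tP B2P uB2).
Qed.

Lemma partition_cover (U : finType) (P : {set {set U}}) (u : U) :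
  partition P [set: U] -> exists2 B, B \in P & u \in B.
Proof.
case/and3P=> /eqP coverP _ _.
have /bigcupP[B BP uB] : u \in cover P by rewrite coverP inE.
by exists B.
Qed.

Section CompositionWithXpow.
Variables (T : finType) (Sg : {set {ffun T -> T}}) (a : nat).
Hypotheses (Sg_1 : ffid T \in Sg) (a_gt0 : 0 < a).

Definition map_fst (q : {ffun T -> T}) : {ffun (T * 'I_a)%type -> (T * 'I_a)%type} :=
  [ffun p => (q p.1, p.2)].

Definition fst_maps := [set map_fst q | q in Sg].

Lemma fst_maps1 : ffid _ \in fst_maps.
Proof. by apply/imsetP; exists (ffid T) => //; apply/ffunP => -[t j]; rewrite !ffunE. Qed.

Section Flatten.
Variables (U : finType) (P : {set {set U}}) (partP : partition P [set: U]).
Variable h : {dffun forall B : blk P, sp_obj (Xpow a) (elt (val B))}.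

Definition flatten_blocks (c : {ffun T -> blk P}) : {ffun (T * 'I_a)%type -> U} :=
  [ffun p => val (xlist (h (c p.1)) p.2)].

Lemma block_xlist (B : blk P) : val B = [set val (xlist (h B) j) | j : 'I_a].
Proof.
apply/setP => u; apply/idP/imsetP => [uB|[j _ ->]]; last exact: valP.
by have [j eq_j] := xlist_onto (h B) (exist _ u uB); exists j; rewrite ?eq_j.
Qed.

Lemma flatten_lcoset (c : {ffun T -> blk P}) :
  [set flatten_blocks c' | c' in lcoset Sg c] = lcoset fst_maps (flatten_blocks c).
Proof.
rewrite /lcoset /fst_maps -!imset_comp; apply: eq_imset => q /=.
by apply/ffunP => -[t j]; rewrite !ffunE.
Qed.

Lemma flatten_blocks_inj (c : {ffun T -> blk P}) : injective c -> injective (flatten_blocks c).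
Proof.
move=> c_inj [t j] [t' j']; rewrite !ffunE => eq_u.
have eq_c : c t = c t'.
  apply/val_inj/(partition_block_eq partP (valP _) (valP _) (valP (xlist (h (c t)) j))).
  by rewrite eq_u; exact: valP.
have eq_t := c_inj _ _ eq_c; subst t'.
by move/val_inj/inj_xlist: eq_u => /= ->.
Qed.

Lemma flatten_blocks_onto (c : {ffun T -> blk P}) :
  injective c -> #|blk P| = #|T| -> forall u, exists p, flatten_blocks c p = u.
Proof.
move=> c_inj cardP u; have [B BP uB] := partition_cover u partP.
have /codomP[t eq_t] : (exist _ B BP : blk P) \in codom c.
  by apply: (inj_card_onto c_inj); rewrite cardP.
have : u \in val (c t) by rewrite -eq_t.
rewrite block_xlist => /imsetP[j _ eq_u].
by exists (t, j); rewrite ffunE eq_u.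
Qed.

Lemma is_lcoset_flatten (X : {set {ffun T -> blk P}}) :
  is_lcoset Sg X -> is_lcoset fst_maps [set flatten_blocks c | c in X].
Proof.
move=> /(is_lcosetP Sg_1)[c _ [c_inj cardP ->]]; rewrite flatten_lcoset.
have flat_inj := flatten_blocks_inj c_inj; apply: lcoset_is_lcoset => //.
apply/esym/bij_eq_card/(inj_surj_bij flat_inj); exact: flatten_blocks_onto c_inj cardP.
Qed.

End Flatten.

Definition flatten_sp (U : finType) (z : sp_obj (comp_sp (lcoset_sp Sg) (Xpow a)) U) :
  sp_obj (lcoset_sp fst_maps) U :=
  let: existT P (x, h) := z in
  exist _ [set flatten_blocks h c | c in val x] (is_lcoset_flatten (valP P) h (valP x)).

Lemma flatten_sp_val (U : finType) P x h :
  val (@flatten_sp U (existT _ P (x, h))) = [set flatten_blocks h c | c in val x].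
Proof. by []. Qed.

Lemma flatten_sp_nat (U V : finType) (s : bij U V) z :
  flatten_sp (sp_map (comp_sp (lcoset_sp Sg) (Xpow a)) s z)
  = sp_map (lcoset_sp fst_maps) s (flatten_sp z).
Proof.
case: z => [[P partP] [x h]]; rewrite sp_map_comp_sp.
set sP := restr_bij _ _.
apply: val_inj; rewrite !flatten_sp_val sp_map_lcoset_val -!imset_comp.
apply: eq_imset => c; apply/ffunP => -[t j].
rewrite !ffunE (xlist_map (restr_bij _ _)) ffunE /=.
change (s (val (xlist (h (binv sP (sP (c t)))) j)) = s (val (xlist (h (c t)) j))).
by rewrite bK.
Qed.

Lemma flatten_blocks_eq (U : finType) (P P' : {set {set U}}) h h'
    (c : {ffun T -> blk P}) (c' : {ffun T -> blk P'}) :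
  flatten_blocks h c = flatten_blocks h' c' -> forall t, val (c t) = val (c' t).
Proof.
move=> /ffunP eq_flat t; rewrite (block_xlist h (c t)) (block_xlist h' (c' t)).
by apply: eq_imset => j; have := eq_flat (t, j); rewrite !ffunE.
Qed.

Lemma flatten_partitionS (U : finType) (P P' : {set {set U}}) h h'
    (X : {set {ffun T -> blk P}}) (X' : {set {ffun T -> blk P'}}) :
  is_lcoset Sg X ->
  [set flatten_blocks h c | c in X] = [set flatten_blocks h' c | c in X'] -> P \subset P'.
Proof.
move=> /(is_lcosetP Sg_1)[c cX [c_inj cardP _]] eqX.
have /imsetP[c' _ eq_flat] : flatten_blocks h c \in [set flatten_blocks h' c | c in X'].
  by rewrite -eqX; exact: imset_f.
apply/subsetP => B BP.
have /codomP[t eq_t] : (exist _ B BP : blk P) \in codom c.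
  by apply: (inj_card_onto c_inj); rewrite cardP.
have -> : B = val (c t) by rewrite -eq_t.
by rewrite (flatten_blocks_eq eq_flat); exact: valP.
Qed.

Lemma flatten_imsetS (U : finType) (P : {set {set U}}) h h' (Y Y' : {set {ffun T -> blk P}}) :
  [set flatten_blocks h c | c in Y] = [set flatten_blocks h' c | c in Y'] -> Y \subset Y'.
Proof.
move=> eqY; apply/subsetP => c cY.
have /imsetP[c' c'Y' eq_flat] : flatten_blocks h c \in [set flatten_blocks h' c | c in Y'].
  by rewrite -eqY; exact: imset_f.
suff -> : c = c' by [].
by apply/ffunP => t; apply: val_inj; exact: flatten_blocks_eq eq_flat t.
Qed.

Lemma flatten_blocks_xlists_eq (U : finType) (P : {set {set U}}) h h' (c c' : {ffun T -> blk P}) :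
  injective c -> #|blk P| = #|T| -> flatten_blocks h c = flatten_blocks h' c' -> h = h'.
Proof.
move=> c_inj cardP eq_flat.
have eq_c : c' = c.
  by apply/ffunP => t; apply: val_inj; symmetry; exact: flatten_blocks_eq eq_flat t.
subst c'; apply/ffunP => B.
have /codomP[t ->] : B \in codom c by apply: (inj_card_onto c_inj); rewrite cardP.
apply/xlist_inj/ffunP => j; apply: val_inj.
by move/ffunP: eq_flat => /(_ (t, j)); rewrite !ffunE.
Qed.

Lemma flatten_sp_inj (U : finType) : injective (@flatten_sp U).
Proof.
case=> [[P partP] [[X hX] h]] [[P' partP'] [[X' hX'] h']] /(congr1 val).
rewrite !flatten_sp_val /= => eqX.
have eq_part : P = P'.
  apply/eqP; rewrite eqEsubset (flatten_partitionS hX eqX).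
  exact: (flatten_partitionS hX' (esym eqX)).
subst P'; rewrite (bool_irrelevance partP' partP) in h' X' hX' eqX *.
have eq_X : X = X'.
  by apply/eqP; rewrite eqEsubset (flatten_imsetS eqX) (flatten_imsetS (esym eqX)).
subst X'; rewrite (bool_irrelevance hX' hX).
have [c cX [c_inj cardP _]] := is_lcosetP Sg_1 hX.
have /imsetP[c' _ eq_flat] : flatten_blocks h c \in [set flatten_blocks h' c | c in X].
  by rewrite -eqX; exact: imset_f.
by have eq_h := flatten_blocks_xlists_eq c_inj cardP eq_flat; subst h'.
Qed.

Section Unflatten.
Variables (U : finType) (l : {ffun (T * 'I_a)%type -> U}).
Hypotheses (l_inj : injective l) (cardU : #|U| = #|{: T * 'I_a}|).

Definition row_block (t : T) : {set U} := [set l (t, j) | j : 'I_a].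

Definition row_blocks : {set {set U}} := [set row_block t | t : T].

Lemma mem_row_block t j : l (t, j) \in row_block t.
Proof. by apply/imsetP; exists j. Qed.

Lemma row_block_in t : row_block t \in row_blocks.
Proof. exact: imset_f. Qed.

Lemma row_block_inj : injective row_block.
Proof.
move=> t t' eq_row; have := mem_row_block t (Ordinal a_gt0).
by rewrite eq_row => /imsetP[j _ /l_inj[]].
Qed.

Lemma partition_row_blocks : partition row_blocks [set: U].
Proof.
apply/and3P; split.
- apply/eqP/setP => u; rewrite inE.
  have /codomP[[t j] ->] : u \in codom l by apply: (inj_card_onto l_inj); rewrite cardU.
  by apply/bigcupP; exists (row_block t); [exact: row_block_in | exact: mem_row_block].
- apply/trivIsetP => _ _ /imsetP[t _ ->] /imsetP[t' _ ->] neq_row.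
  rewrite -setI_eq0; apply/eqP/setP => u; rewrite !inE.
  apply/andP => -[/imsetP[j _ ->] /imsetP[j' _ /l_inj[eq_t _]]].
  by rewrite eq_t eqxx in neq_row.
- apply/imsetP => -[t _ eq_row].
  by have := mem_row_block t (Ordinal a_gt0); rewrite -eq_row inE.
Qed.

Definition row_index : {ffun T -> blk row_blocks} :=
  [ffun t => exist (fun B => B \in row_blocks) _ (row_block_in t)].

Lemma row_index_inj : injective row_index.
Proof. by move=> t t'; rewrite !ffunE => /(congr1 val)/row_block_inj. Qed.

Lemma card_row_blocks : #|blk row_blocks| = #|T|.
Proof. by rewrite card_elt card_imset ?cardsT //; exact: row_block_inj. Qed.

Lemma blk_row_block (B : blk row_blocks) : exists t, row_block t == val B.
Proof. by case: B => B /= /imsetP[t _ ->]; exists t. Qed.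

Definition block_row (B : blk row_blocks) : T := xchoose (blk_row_block B).

Lemma row_block_row (B : blk row_blocks) : row_block (block_row B) = val B.
Proof. exact/eqP/(xchooseP (blk_row_block B)). Qed.

Lemma block_row_index t : block_row (row_index t) = t.
Proof. by apply: row_block_inj; rewrite row_block_row ffunE. Qed.

Lemma row_in_block (B : blk row_blocks) j : l (block_row B, j) \in val B.
Proof. by rewrite -row_block_row mem_row_block. Qed.

Definition block_ffun (B : blk row_blocks) : {ffun 'I_a -> elt (val B)} :=
  [ffun j => exist (fun u => u \in val B) _ (row_in_block B j)].

Lemma block_ffun_inj (B : blk row_blocks) : injective (block_ffun B).
Proof. by move=> j j'; rewrite !ffunE => /(congr1 val)/l_inj[]. Qed.

Lemma card_block (B : blk row_blocks) : #|elt (val B)| = a.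
Proof.
rewrite card_elt -row_block_row card_imset ?cardsT ?card_ord //.
by move=> j j' /l_inj[].
Qed.

Definition row_xlists : {dffun forall B : blk row_blocks, sp_obj (Xpow a) (elt (val B))} :=
  [ffun B => mk_xlist (@block_ffun_inj B) (@card_block B)].

Lemma flatten_row_xlists : flatten_blocks row_xlists row_index = l.
Proof.
apply/ffunP => -[t j]; rewrite ffunE [row_xlists _]ffunE /= [block_ffun _ _]ffunE /=.
by rewrite block_row_index.
Qed.

End Unflatten.

Lemma flatten_sp_surj (U : finType) (S : sp_obj (lcoset_sp fst_maps) U) :
  exists z, flatten_sp z = S.
Proof.
case: S => S hS; have [l _ [l_inj cardU eS]] := is_lcosetP fst_maps1 hS.
have hx : is_lcoset Sg (lcoset Sg (row_index l)).
  exact: lcoset_is_lcoset (row_index_inj l_inj) (card_row_blocks l_inj).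
exists (existT _ (exist (fun P => partition P [set: U]) _ (partition_row_blocks l_inj cardU))
          (exist (fun X => is_lcoset Sg X) _ hx, row_xlists l_inj)).
by apply: val_inj; rewrite flatten_sp_val /= flatten_lcoset flatten_row_xlists eS.
Qed.

Lemma lcoset_sp_comp_Xpow : species_iso (comp_sp (lcoset_sp Sg) (Xpow a)) (lcoset_sp fst_maps).
Proof.
exists flatten_sp; split; last exact: flatten_sp_nat.
by move=> U; apply: inj_surj_bij; [exact: flatten_sp_inj | exact: flatten_sp_surj].
Qed.

End CompositionWithXpow.

Lemma cyc_fun_nseq a i j k : k < i -> j < a ->
  cyc_fun (nseq a i) (j * i + k) = j * i + cyc_fun [:: i] k.
Proof.
move=> lt_k_i; elim: a j => [|a IH] [|j] //= lt_j_a.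
- by rewrite mul0n !add0n lt_k_i.
- rewrite ifF; last by lia.
  have -> : j.+1 * i + k - i = j * i + k by rewrite mulSn; lia.
  by rewrite IH //= lt_k_i mulSn addnA.
Qed.

Section EqualCycles.
Variables (i a : nat).
Hypothesis a_gt0 : 0 < a.

Local Notation m := (sumn [:: i]).
Local Notation N := (sumn (nseq a i)).

Lemma block_ord_subproof (p : 'I_m * 'I_a) : p.2 * m + p.1 < N.
Proof.
case: p => [[k lt_k] [j lt_j]] /=; rewrite sumn_nseq /= addn0 in lt_k *; nia.
Qed.

Definition block_ord (p : 'I_m * 'I_a) : 'I_N := Ordinal (block_ord_subproof p).

Lemma block_ord_bij : bijective block_ord.
Proof.
apply: inj_card_bij; last by rewrite card_prod !card_ord sumn_nseq /= addn0 mulnC.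
move=> [k j] [k' j'] /(congr1 val) /= /(congr1 (edivn^~ m)).
rewrite !edivn_eq // => -[eq_j eq_k].
by congr pair; apply: val_inj.
Qed.

Let block_bij := bij_of_bijective block_ord_bij.

Lemma sigma_nseq_block (p : 'I_m * 'I_a) :
  sigma (nseq a i) (block_ord p) = block_ord (sigma [:: i] p.1, p.2).
Proof.
apply: val_inj; rewrite /= !permE /=.
case: p => [[k lt_k] [j lt_j]] /=; rewrite /= addn0 in lt_k.
by rewrite addn0 cyc_fun_nseq.
Qed.

Lemma sigma_nseq_block_exp r (p : 'I_m * 'I_a) :
  (sigma (nseq a i) ^+ r)%g (block_ord p) = block_ord ((sigma [:: i] ^+ r)%g p.1, p.2).
Proof.
elim: r p => [|r IH] p; first by rewrite !expg0 !perm1; case: p.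
by rewrite !expgSr !permM IH sigma_nseq_block.
Qed.

Lemma Cyc_nseq_comp : species_iso (Cyc (nseq a i)) (comp_sp (Cyc [:: i]) (Xpow a)).
Proof.
apply: iso_trans (quot_sp_lcoset _) _.
apply: iso_trans _ (iso_comp _ (iso_sym (quot_sp_lcoset _))).
apply: iso_trans _ (iso_sym (lcoset_sp_comp_Xpow (perm_maps1 _) a_gt0)).
apply: (@lcoset_sp_conj _ _ _ _ block_bij).
- move=> _ /imsetP[_ /cycleP[r ->] ->].
  exists (map_fst a [ffun x => (sigma [:: i] ^+ r)%g x]).
    by apply/imset_f/imset_f/mem_cycle.
  by move=> p; rewrite !ffunE sigma_nseq_block_exp.
- move=> _ /imsetP[_ /imsetP[_ /cycleP[r ->] ->] ->].
  exists [ffun x => (sigma (nseq a i) ^+ r)%g x]; first exact/imset_f/mem_cycle.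
  by move=> p; rewrite !ffunE sigma_nseq_block_exp.
Qed.

End EqualCycles.

Unset Implicit Arguments.
Set Strict Implicit.

Theorem mainTheorem3 (n : nat) (alpha : seq (nat * nat)) :
  uniq [seq p.1 | p <- alpha] ->
  all (fun p => 0 < p.1) alpha ->
  all (fun p => 0 < p.2) alpha ->
  sumn [seq p.1 * p.2 | p <- alpha] = n ->
  species_iso (Kalpha alpha)
    (prod_list [seq comp_sp (Cyc [:: p.1]) (Xpow p.2) | p <- alpha]).
Proof.
move=> _ _ mult_gt0 _.
apply: iso_trans (prod_list_rev _ alpha) _ => [p|].
  exact: is_lcoset_species_quot.
apply: iso_prod_list => p p_alpha.
exact: Cyc_nseq_comp (allP mult_gt0 p p_alpha).
Qed.
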